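(* The DRIMA factorization does not guarantee the RIGM principle for the CVaR metric. Precisely: there exist a number of agents $N$, finite action sets, a function $Q_{mix}:\mathbb{R}^N\to\mathbb{R}$ nondecreasing in each argument, per-agent return distributions $[Z_i(\tau_i,u_i)]_{i=1}^N$ with quantile functions $\theta_i(\tau_i,u_i,\omega)$, and a risk level $\alpha\in(0,1]$ such that, letting $Z_{tran}(\boldsymbol\tau,\boldsymbol u)$ be the return distribution with quantile function $\theta_{tran}(\boldsymbol\tau,\boldsymbol u,\omega)=Q_{mix}(\theta_1(\tau_1,u_1,\omega),\dots,\theta_N(\tau_N,u_N,\omega))$, $\omega\in(0,1]$, the utilities $[Z_i]_{i=1}^N$ do not satisfy RIGM for $Z_{tran}$ with risk metric $\mathrm{CVaR}_\alpha$.
   Context: There are $N$ agents; agent $i$ has observation history $\tau_i$ and finite action set $U_i$; $\boldsymbol\tau=(\tau_1,\dots,\tau_N)$, $\boldsymbol u=(u_1,\dots,u_N)$. For a real random variable $Z$ with CDF $F_Z$, its quantile function is $\theta_Z(\omega)=\inf\{z\in\mathbb{R}:\omega\le F_Z(z)\}$, $\omega\in(0,1]$. $\mathrm{CVaR}_\alpha(Z)=\frac1\alpha\int_0^\alpha\theta_Z(\omega)\,d\omega$ (the distortion risk measure with distortion $g(\omega)=\min(\omega/\alpha,1)$; $\mathrm{CVaR}_1=\mathbb{E}$). RIGM: given a risk metric $\psi$, per-agent return distributions $[Z_i(\tau_i,u_i)]$ satisfy RIGM for a joint return distribution $Z(\boldsymbol\tau,\boldsymbol u)$ with $\psi$ under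 $\boldsymbol\tau$ if $\arg\max_{\boldsymbol u}\psi[Z(\boldsymbol\tau,\boldsymbol u)]=(\arg\max_{u_1}\psi[Z_1(\tau_1,u_1)],\dots,\arg\max_{u_N}\psi[Z_N(\tau_N,u_N)])$. Argmax sets are assumed to be singletons (ties broken by smallest index). *)

(* Return distributions are represented by their
   quantile functions theta : R -> R (only the values on (0,1] matter). *)
From HB Require Import structures.
From mathcomp Require Import all_boot all_order all_algebra.
From mathcomp Require Import all_classical all_reals.
From mathcomp Require Import topology normedtype sequences measure
  lebesgue_measure lebesgue_integral.
From mathcomp Require Import Rstruct Rstruct_topology.

Set Implicit Arguments.
Unset Strict Implicit.
Unset Printing Implicit Defensive.
Import Order.TTheory GRing.Theory Num.Theory.
Import numFieldNormedType.Exports.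
Local Open Scope classical_set_scope.
Local Open Scope ring_scope.

Definition is_quantile (R : realType) (th : R -> R) : Prop :=
  (forall x y : R, 0 < x -> x <= y -> y <= 1 -> th x <= th y) /\
  (forall w : R, 0 < w -> w <= 1 -> th x @[x --> w^'-] --> th w).

Definition CVaR (R : realType) (alpha : R) (th : R -> R) : \bar R :=
  ((alpha^-1)%:E * \int[@lebesgue_measure R]_(w in `]0%R, alpha]%classic) (th w)%:E)%E.

Definition argmax_set (A : Type) (R : realType) (f : A -> \bar R) : set A :=
  [set u | forall v, (f v <= f u)%E].

Definition is_singleton (A : Type) (S : set A) : Prop :=
  exists x, S = [set x].

Definition mix_monotone (R : realType) (N : nat) (Q : ('I_N -> R) -> R) : Prop :=
  forall x y : 'I_N -> R, (forall i, x i <= y i) -> Q x <= Q y.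

Definition joint_action (N : nat) (n : 'I_N -> nat) : Type :=
  forall i : 'I_N, 'I_(n i).

(* RIGM for risk metric psi (given as a map from quantile functions to \bar R),
   per-agent quantile functions thi (at fixed histories) and joint quantile
   function thJ (at the fixed joint history). *)
Definition RIGM (R : realType) (N : nat) (n : 'I_N -> nat)
    (psi : (R -> R) -> \bar R)
    (thi : forall i : 'I_N, 'I_(n i) -> R -> R)
    (thJ : joint_action n -> R -> R) : Prop :=
  argmax_set (fun u : joint_action n => psi (thJ u)) =
  [set u : joint_action n | forall i, argmax_set (fun a => psi (thi i a)) (u i)].

From HB Require Import structures.
From mathcomp Require Import all_boot all_order all_algebra.
From mathcomp Require Import all_classical all_reals.
From mathcomp Require Import topology normedtype sequences measure
  lebesgue_measure lebesgue_integral.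
From mathcomp Require Import Rstruct Rstruct_topology.
From mathcomp Require Import lra measurable_realfun.
Import Order.TTheory GRing.Theory Num.Theory.
Import numFieldNormedType.Exports.
Local Open Scope classical_set_scope.
Local Open Scope ring_scope.

(* A single agent with a safe action (return 0) and a risky one (return -1 or 2,
   each with probability 1/2), risk level alpha = 1 (so CVaR is the mean), and
   Q_mix x = min x 0. The risky action has mean 1/2 > 0, so the agent prefers it;
   but Q_mix cuts off its upside, leaving a team quantile of -1 or 0 with mean
   -1/2 < 0, so the team prefers the safe action. *)

Lemma integral_itv_oc_eq_cst (R : realType) (x y c : R) (f : R -> R) : x <= y ->
  {in `]x, y], forall w, f w = c} ->
  (\int[@lebesgue_measure R]_(w in `]x, y]) (f w)%:E = (c * (y - x))%:E)%E.
Proof.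
move=> xy fc.
under eq_integral => w /set_mem wxy do rewrite fc //.
rewrite integral_cst // [X in (_ * X)%E]lebesgue_measure_itv /= lte_fin.
move: xy; rewrite le_eqVlt => /orP[/eqP <-|->]; last by rewrite -EFinB -EFinM.
by rewrite ltxx subrr mulr0 mule0.
Qed.

Section BinaryQuantile.
Context {R : realType}.
Implicit Types p a b c w : R.

Definition binary_quantile p a b w : R := if w <= p then a else b.

Lemma binary_quantile_is_quantile p a b :
  a <= b -> is_quantile (binary_quantile p a b).
Proof.
move=> ab; split=> [x y _ xy _ | w _ _]; rewrite /binary_quantile.
  by case: ifP => // xp; case: ifP => // yp; move: xp; rewrite (le_trans xy yp).
apply: cvg_near_cst; case: (leP w p) => [wp | pw]; near=> x.
  by rewrite (le_trans _ wp) //; apply/ltW; near: x; exact: nbhs_left_lt.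
by rewrite leNgt ifF //; apply/negbTE/negPn; near: x; exact: nbhs_left_gt.
Unshelve. all: end_near.
Qed.

Lemma min_binary_quantile p a b c w :
  Order.min (binary_quantile p a b w) c =
  binary_quantile p (Order.min a c) (Order.min b c) w.
Proof. by rewrite /binary_quantile; case: ifP. Qed.

Lemma measurable_binary_quantile p a b :
  measurable_fun setT (binary_quantile p a b).
Proof. exact: measurable_fun_ifT (measurable_fun_ler _ _) _ _. Qed.

Lemma CVaR1_binary_quantile p a b : 0 <= p <= 1 ->
  CVaR 1 (binary_quantile p a b) = (p * a + (1 - p) * b)%:E.
Proof.
case/andP=> p0 p1; rewrite /CVaR invr1 mul1e.
have -> : `]0, 1]%classic = `]0, p] `|` `]p, 1] :> set R.
  by rewrite (itv_bndbnd_setU (x := BRight p)) // bnd_simp.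
rewrite integral_setU //; last 2 first.
- apply/(measurable_EFinP _ (binary_quantile p a b)).
  exact: measurable_funS (measurable_binary_quantile p a b).
- apply: lt_disjoint => x y; rewrite !in_itv /= => /andP[_ xp] /andP[py _].
  exact: le_lt_trans xp py.
rewrite (@integral_itv_oc_eq_cst _ _ _ a) //; last first.
  by move=> w; rewrite in_itv /= /binary_quantile => /andP[_ ->].
rewrite (@integral_itv_oc_eq_cst _ _ _ b) //; last first.
  by move=> w; rewrite in_itv /= /binary_quantile => /andP[pw _]; rewrite leNgt pw.
by rewrite -EFinD; congr EFin; lra.
Qed.

End BinaryQuantile.

Lemma argmax_set_strict_max (A : Type) (R : realType) (f : A -> \bar R) (u : A) :
  (forall v, v <> u -> (f v < f u)%E) -> argmax_set f = [set u].
Proof.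
move=> fu; apply/seteqP; split=> [v vmax | _ -> v] /=.
  by apply: contrapT => /fu; rewrite ltNge vmax.
by have [->|/fu/ltW] := pselect (v = u).
Qed.

Section SingleAgent.
Context {R : realType} {k : nat}.

Lemma argmax_set_single_agent (f : 'I_k -> \bar R) :
  argmax_set (fun u : joint_action (fun _ : 'I_1 => k) => f (u ord0)) =
  [set u | argmax_set f (u ord0)].
Proof.
by apply/seteqP; split=> u umax v /=; [exact: (umax (fun _ => v)) | exact: umax].
Qed.

Lemma single_agent_joint_action_eq (u v : joint_action (fun _ : 'I_1 => k)) :
  u ord0 = v ord0 -> u = v.
Proof. by move=> uv; apply: functional_extensionality_dep => i; rewrite (ord1 i). Qed.

End SingleAgent.

Definition risky : 'I_2 := ord_max.

Lemma neq_ord0_risky (a : 'I_2) : a <> ord0 -> a == risky.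
Proof. by case: a => [[|[|m]] am] // a0; case: a0; exact: val_inj. Qed.

Section Counterexample.
Context {R : realType}.

Definition agent_quantile (a : 'I_2) : R -> R :=
  if a == risky then binary_quantile (1/2) (-1) 2 else binary_quantile (1/2) 0 0.

Definition team_quantile (a : 'I_2) (w : R) : R := Order.min (agent_quantile a w) 0.

Lemma team_quantileE a : team_quantile a =
  if a == risky then binary_quantile (1/2) (-1) 0 else binary_quantile (1/2) 0 0.
Proof.
apply: funext => w; rewrite /team_quantile /agent_quantile.
case: ifP => _; rewrite min_binary_quantile ?minxx //.
by rewrite (min_idPl _) ?(min_idPr _) //; lra.
Qed.

Lemma agent_quantile_is_quantile a : is_quantile (agent_quantile a).
Proof.
by rewrite /agent_quantile; case: ifP => _; apply: binary_quantile_is_quantile; lra.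
Qed.

Lemma team_quantile_is_quantile a : is_quantile (team_quantile a).
Proof.
by rewrite team_quantileE; case: ifP => _; apply: binary_quantile_is_quantile; lra.
Qed.

Lemma CVaR1_agent_quantile a :
  CVaR 1 (agent_quantile a) = (if a == risky then 1/2 else 0)%:E.
Proof.
by rewrite /agent_quantile; case: ifP => _;
  (rewrite CVaR1_binary_quantile; [congr EFin | ]); lra.
Qed.

Lemma CVaR1_team_quantile a :
  CVaR 1 (team_quantile a) = (if a == risky then - (1/2) else 0)%:E.
Proof.
by rewrite team_quantileE; case: ifP => _;
  (rewrite CVaR1_binary_quantile; [congr EFin | ]); lra.
Qed.

Lemma argmax_agent_quantile :
  argmax_set (fun a => CVaR 1 (agent_quantile a)) = [set risky].
Proof.
apply: argmax_set_strict_max => v /eqP/negPf vr.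
by rewrite !CVaR1_agent_quantile vr eqxx lte_fin; lra.
Qed.

Lemma argmax_team_quantile :
  argmax_set (fun a => CVaR 1 (team_quantile a)) = [set ord0].
Proof.
apply: argmax_set_strict_max => v /neq_ord0_risky vr.
by rewrite !CVaR1_team_quantile vr lte_fin; lra.
Qed.

End Counterexample.

Theorem theorem3 :
  exists (N : nat) (n : 'I_N -> nat) (Hist : Type) (tau : 'I_N -> Hist)
    (Qmix : ('I_N -> Rdefinitions.R) -> Rdefinitions.R)
    (theta : forall i : 'I_N, Hist -> 'I_(n i) -> Rdefinitions.R -> Rdefinitions.R)
    (alpha : Rdefinitions.R),
    let theta_tran (u : joint_action n) (w : Rdefinitions.R) :=
      Qmix (fun i => theta i (tau i) (u i) w) in
    (forall i, 0 < n i)%N /\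
        0 < alpha <= 1 /\
        mix_monotone Qmix /\
        (forall i h a, is_quantile (theta i h a)) /\
        (forall u, is_quantile (theta_tran u)) /\
        (forall i, is_singleton (argmax_set
            (fun a => CVaR alpha (theta i (tau i) a)))) /\
        is_singleton (argmax_set (fun u => CVaR alpha (theta_tran u))) /\
      ~ RIGM (CVaR alpha) (fun i a => theta i (tau i) a) theta_tran.
Proof.
exists 1%N, (fun _ => 2%N), unit, (fun _ => tt), (fun x => Order.min (x ord0) 0),
  (fun _ _ => @agent_quantile _), 1 => theta_tran.
have argmax_tran :
    argmax_set (fun u => CVaR 1 (theta_tran u)) = [set u | u ord0 = ord0].
  by rewrite (argmax_set_single_agent (fun a => CVaR 1 (team_quantile a)))
    argmax_team_quantile.
split=> //; split; first by rewrite ltr01 lexx.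
split; first by move=> x y xy; exact: le_min2.
split; first by move=> _ _; exact: agent_quantile_is_quantile.
split; first by move=> u; exact: team_quantile_is_quantile.
split; first by move=> _; exists risky; exact: argmax_agent_quantile.
split.
- exists (fun _ => ord0); rewrite argmax_tran; apply/seteqP.
  by split=> u /=; [exact: single_agent_joint_action_eq | move->].
- rewrite /RIGM argmax_tran => /seteqP[+ _] => /(_ (fun _ => ord0) erefl ord0).
  by rewrite /= argmax_agent_quantile.
Qed.
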